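(* Let $F$ be a finite family of seeds, $i\ge1$, $m\ge1$ and $0\le k\le im$ integers. If the $i$-regular expansion $i\otimes F$ solves the $(im,k)$-problem, then $F$ solves the $(im,k)$-problem and $F$ solves the $(m,\lfloor k/i\rfloor)$-problem.
   Context: A seed is a finite set $Q=\{p_1<\dots<p_d\}$ of nonnegative integers with $p_1=0$; its span is $p_d+1$. An $(m,k)$-similarity is a binary word of length $m$ with exactly $k$ zeros. $Q$ matches a binary word $w$ at position $j$ ($1\le j\le |w|-p_d$) if $w[j+p_t]=1$ for all $t$; $Q$ detects $w$ if it matches at some position. A family $F$ solves the $(m,k)$-problem if every $(m,k)$-similarity is detected by at least one seed of $F$. The $i$-regular expansion is $i\otimes Q=\{ip_1,\dots,ip_d\}$ and $i\otimes F=\{i\otimes Q:Q\in F\}$. *)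

From mathcomp Require Import all_boot.
Set Implicit Arguments. Unset Strict Implicit. Unset Printing Implicit Defensive.

(* A seed is a finite set of naturals containing 0, represented by a
   duplicate-free list (order irrelevant). *)
Definition is_seed (Q : seq nat) : bool := (0 \in Q) && uniq Q.

(* largest element p_d of a seed; span = seed_max Q + 1 *)
Definition seed_max (Q : seq nat) : nat := \max_(p <- Q) p.

(* A binary word is a seq bool (true = 1, false = 0); positions 0-indexed.
   An (m,k)-similarity: length m with exactly k zeros. *)
Definition similarity (m k : nat) (w : seq bool) : bool :=
  (size w == m) && (count (fun b => ~~ b) w == k).

(* Q matches w at (0-indexed) position j: j + p_d < |w| and w[j+p] = 1
   for all p in Q.  (Paper: 1-indexed j with 1 <= j <= |w| - p_d.) *)
Definition matches_at (Q : seq nat) (w : seq bool) (j : nat) : Prop :=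
  j + seed_max Q < size w /\ forall p, p \in Q -> nth false w (j + p) = true.

Definition detects (Q : seq nat) (w : seq bool) : Prop :=
  exists j, matches_at Q w j.

Definition solves (F : seq (seq nat)) (m k : nat) : Prop :=
  forall w, similarity m k w -> exists2 Q, Q \in F & detects Q w.

Definition expand (i : nat) (Q : seq nat) : seq nat := [seq i * p | p <- Q].
Definition expandF (i : nat) (F : seq (seq nat)) : seq (seq nat) :=
  [seq expand i Q | Q <- F].

From mathcomp Require Import all_boot.
Set Implicit Arguments. Unset Strict Implicit. Unset Printing Implicit Defensive.

(* Cut a word W of length i*m into i consecutive blocks of length
   m and let [transpose i m W] read the blocks column by column: position
   a*i + s of the transposed word is position a of block s.  Transposition
   permutes the letters, so it preserves the number of zeros, and a match of
   the expanded seed i(x)Q at position j of the transposed word is exactly a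
   match of Q inside block (j mod i) at offset (j div i).  Hence if i(x)F
   solves the (im,k)-problem, every (im,k)-similarity has a seed of F matching
   inside one of its blocks ([block_solves]).  This gives both conclusions:
   - a match inside a block is a match in W, so F solves the (im,k)-problem;
   - a word v of length m with floor(k/i) zeros can be stacked i times, r = k
     mod i copies having one extra zero, into an (im,k)-similarity all of
     whose blocks lie below v; a match inside a block is then a match in v. *)

Lemma block_index_lt n q s a : s < q -> a < n -> s * n + a < q * n.
Proof.
move=> sq an; apply: (@leq_trans (s * n + n)); first by rewrite ltn_add2l.
by rewrite addnC -mulSn leq_mul2r sq orbT.
Qed.

Section Transpose.
Variables (i m : nat).
Hypothesis i_gt0 : 0 < i.

(* Letter n = a*i + s of the transposed word is letter s*m + a of W. *)
Definition transpose_index (n : nat) : nat := (n %% i) * m + n %/ i.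

Definition transpose (W : seq bool) : seq bool :=
  [seq nth false W (transpose_index n) | n <- iota 0 (i * m)].

Lemma divn_lt_dim n : n < i * m -> n %/ i < m.
Proof. by rewrite ltn_divLR // mulnC. Qed.

Lemma transpose_index_lt n : n < i * m -> transpose_index n < i * m.
Proof. by move=> nim; rewrite block_index_lt ?ltn_mod ?divn_lt_dim. Qed.

Lemma transpose_index_inj :
  {in gtn (i * m) &, injective transpose_index}.
Proof.
move=> n1 n2 /divn_lt_dim q1 /divn_lt_dim q2 e.
have m_gt0 : 0 < m by case: (m) q1.
have r12 : n1 %% i = n2 %% i.
  have := congr1 (divn^~ m) e.
  by rewrite /= /transpose_index !divnMDl // (divn_small q1) (divn_small q2) !addn0.
have q12 : n1 %/ i = n2 %/ i.
  by have := congr1 (modn^~ m) e; rewrite /= /transpose_index !modnMDl !modn_small.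
by rewrite (divn_eq n1 i) (divn_eq n2 i) r12 q12.
Qed.

Lemma perm_transpose_index :
  perm_eq [seq transpose_index n | n <- iota 0 (i * m)] (iota 0 (i * m)).
Proof.
have uniq_idx : uniq [seq transpose_index n | n <- iota 0 (i * m)].
  rewrite map_inj_in_uniq ?iota_uniq // => n1 n2.
  by rewrite !mem_iota !add0n; exact: transpose_index_inj.
have sub_idx : {subset [seq transpose_index n | n <- iota 0 (i * m)] <= iota 0 (i * m)}.
  move=> t /mapP [n]; rewrite !mem_iota !add0n => nim ->.
  exact: transpose_index_lt.
have [_ eq_idx] := uniq_min_size uniq_idx sub_idx (eq_leq (esym (size_map _ _))).
by apply: uniq_perm; rewrite ?iota_uniq.
Qed.

Lemma count_transpose (P : pred bool) W :
  size W = i * m -> count P (transpose W) = count P W.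
Proof.
move=> sW; rewrite /transpose (map_comp (nth false W) transpose_index) count_map.
by rewrite (permP perm_transpose_index) -count_map -sW -/(mkseq _ _) mkseq_nth.
Qed.

Lemma size_transpose W : size (transpose W) = i * m.
Proof. by rewrite size_map size_iota. Qed.

Lemma nth_transpose W a s : a < m -> s < i ->
  nth false (transpose W) (a * i + s) = nth false W (s * m + a).
Proof.
move=> am si; rewrite /transpose (nth_map 0); last first.
  by rewrite size_iota [i * m]mulnC block_index_lt.
rewrite nth_iota; last by rewrite [i * m]mulnC block_index_lt.
by rewrite add0n /transpose_index modnMDl modn_small // divnMDl // (divn_small si) addn0.
Qed.

End Transpose.

Lemma mem_seed_max (Q : seq nat) p : p \in Q -> p <= seed_max Q.
Proof. by move=> pQ; exact: (@leq_bigmax_seq _ Q xpredT id p). Qed.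

Lemma seed_max_expand i (Q : seq nat) : seed_max (expand i Q) = i * seed_max Q.
Proof.
rewrite /seed_max /expand big_map.
by elim: Q => [|p Q IH]; rewrite ?big_nil ?muln0 // !big_cons IH maxnMr.
Qed.

Definition block_match (m : nat) (Q : seq nat) (W : seq bool) (s a : nat) : Prop :=
  a + seed_max Q < m /\ forall p, p \in Q -> nth false W (s * m + (a + p)) = true.

Definition block_solves (F : seq (seq nat)) (i m k : nat) : Prop :=
  forall W, similarity (i * m) k W ->
  exists2 Q, Q \in F & exists s a, s < i /\ block_match m Q W s a.

Lemma expand_match_transpose i m Q W j : 0 < i ->
  matches_at (expand i Q) (transpose i m W) j ->
  exists s a, s < i /\ block_match m Q W s a.
Proof.
move=> i_gt0 [j_lt j_ones].
rewrite seed_max_expand size_transpose in j_lt.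
have a_lt : j %/ i + seed_max Q < m.
  rewrite -(ltn_pmul2r i_gt0) mulnDl [m * i]mulnC; apply: leq_ltn_trans j_lt.
  by rewrite [i * _]mulnC leq_add2r leq_divM.
exists (j %% i), (j %/ i); split; first by rewrite ltn_mod.
split=> // p pQ.
have p_lt : j %/ i + p < m by apply: leq_ltn_trans a_lt; rewrite leq_add2l mem_seed_max.
rewrite -(nth_transpose i_gt0 W p_lt (ltn_pmod j i_gt0)).
by rewrite mulnDl addnAC -divn_eq mulnC j_ones ?map_f.
Qed.

(* If i(x)F solves the (im,k)-problem, F solves it blockwise: apply the
   hypothesis to the transposed word, which is again an (im,k)-similarity. *)
Lemma expand_block_solves F i m k : 0 < i ->
  solves (expandF i F) (i * m) k -> block_solves F i m k.
Proof.
move=> i_gt0 hexp W /andP [/eqP sW /eqP cW].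
have [_ /mapP [Q QF ->] [j hj]] : exists2 Q', Q' \in expandF i F & detects Q' (transpose i m W).
  by apply: hexp; rewrite /similarity size_transpose (count_transpose i_gt0 _ sW) cW !eqxx.
by exists Q => //; exact: expand_match_transpose hj.
Qed.

Lemma block_match_detects i m Q W s a : size W = i * m -> s < i ->
  block_match m Q W s a -> detects Q W.
Proof.
move=> sW si [a_lt a_ones]; exists (s * m + a); split.
  by rewrite -addnA sW block_index_lt.
by move=> p pQ; rewrite -addnA a_ones.
Qed.

Lemma block_solves_solves F i m k : block_solves F i m k -> solves F (i * m) k.
Proof.
move=> hblock W simW; have [Q QF [s [a [si bm]]]] := hblock W simW.
case/andP: simW => /eqP sW _.
by exists Q => //; exact: block_match_detects sW si bm.
Qed.

Lemma nth_flatten_blocks (ws : seq (seq bool)) m s x :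
  all (fun u => size u == m) ws -> x < m ->
  nth false (flatten ws) (s * m + x) = nth false (nth [::] ws s) x.
Proof.
move=> + xm; elim: ws s => [|u ws IH] s; first by rewrite !nth_nil.
case/andP=> /eqP su sws; case: s => [|s] /=; first by rewrite nth_cat su xm.
by rewrite nth_cat su mulSn -addnA ltnNge leq_addr addKn IH.
Qed.

Lemma block_match_flatten (ws : seq (seq bool)) v m Q s a :
  all (fun u => size u == m) ws -> size v = m ->
  {in ws, forall u y, nth false u y -> nth false v y} -> s < size ws ->
  block_match m Q (flatten ws) s a -> matches_at Q v a.
Proof.
move=> sws sv below s_lt [a_lt a_ones]; split; first by rewrite sv.
move=> p pQ; have p_lt : a + p < m by apply: leq_ltn_trans a_lt; rewrite leq_add2l mem_seed_max.
by apply: (below _ (mem_nth [::] s_lt)); rewrite -(nth_flatten_blocks s sws p_lt) a_ones.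
Qed.

Lemma lower_word (v : seq bool) n : n <= count id v ->
  exists v', [/\ size v' = size v, forall y, nth false v' y -> nth false v y
             & count negb v' = count negb v + n].
Proof.
elim: v n => [|b v IH] n /=; first by rewrite leqn0 => /eqP ->; exists [::].
case: b => /=; last first.
  move=> /IH [v' [sv below cv]]; exists (false :: v'); split=> /=; rewrite ?sv ?cv //.
  by case.
case: n => [|n] hn.
  by exists (true :: v); rewrite addn0.
case: (IH n hn) => v' [sv below cv]; exists (false :: v'); split=> /=; rewrite ?sv ?cv ?addnS //.
by case.
Qed.

(* When k mod i > 0, a word of length m with k div i zeros has a one left,
   since (k div i) * i < k <= i * m. *)
Lemma quotient_word_ones i m k (v : seq bool) : 0 < i -> k <= i * m ->
  size v = m -> count negb v = k %/ i -> (0 < k %% i) <= count id v.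
Proof.
move=> i_gt0 km sv cv; case: posnP => //= r_gt0.
have sum_v := count_predC id v; rewrite /predC sv cv in sum_v.
rewrite -(ltn_add2r (k %/ i)) sum_v add0n -(ltn_pmul2r i_gt0) [m * i]mulnC.
apply: leq_trans km; rewrite {2}(divn_eq k i).
by rewrite -[X in X < _]addn0 ltn_add2l.
Qed.

(* Stacking argument: r = k mod i copies of v with one more zero and i - r
   copies of v form an (im,k)-similarity whose blocks all lie below v. *)
Lemma block_solves_quotient F i m k : 0 < i -> k <= i * m ->
  block_solves F i m k -> solves F m (k %/ i).
Proof.
move=> i_gt0 km hblock v /andP [/eqP sv /eqP cv].
have ones_v := quotient_word_ones i_gt0 km sv cv.
have r_le : k %% i <= i by rewrite ltnW ?ltn_pmod.
set c := k %/ i in cv *; set r := k %% i in ones_v r_le *.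
have k_eq : k = c * i + r by rewrite /c /r -divn_eq.
have [v' [sv' below' cv']] := lower_word ones_v.
pose ws := nseq r v' ++ nseq (i - r) v.
have size_ws : size ws = i by rewrite size_cat !size_nseq subnKC.
have sizes : all (fun u => size u == m) ws.
  by rewrite all_cat !all_nseq sv' sv eqxx !orbT.
have below : {in ws, forall u y, nth false u y -> nth false v y}.
  by move=> u; rewrite mem_cat => /orP [] /nseqP [-> _].
have zeros : count negb (flatten ws) = k.
  rewrite count_flatten map_cat !map_nseq sumn_cat !sumn_nseq cv' cv.
  rewrite mulnDl addnAC -mulnDr subnKC // k_eq.
  by case: (r) => //= r'; rewrite mul1n.
have simW : similarity (i * m) k (flatten ws).
  rewrite /similarity zeros eqxx andbT size_flatten /shape map_cat !map_nseq.
  by rewrite sumn_cat !sumn_nseq sv' sv -mulnDr subnKC // mulnC.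
have [Q QF [s [a [s_lt bm]]]] := hblock _ simW.
exists Q => //; exists a.
by apply: (block_match_flatten sizes sv below _ bm); rewrite size_ws.
Qed.

Theorem mainTheorem5 (F : seq (seq nat)) (i m k : nat) :
  all is_seed F -> 1 <= i -> 1 <= m -> k <= i * m ->
  solves (expandF i F) (i * m) k ->
  solves F (i * m) k /\ solves F m (k %/ i).
Proof.
move=> _ i_gt0 _ km hexp.
have hblock := expand_block_solves i_gt0 hexp.
by split; [exact: block_solves_solves | exact: block_solves_quotient].
Qed.
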